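(* Let $G=A*_C\varphi$ with $|A/C|\ge2$, $|A/\varphi(C)|\ge2$ and generating set $\{t\}\cup(A\setminus\{1\})$. Fix $g\in A\setminus C$ and $h\in A\setminus\varphi(C)$ and for $i\ge0$ let $$w_i=t^{10^i}gt^{-10^i}h\,t^{10^i}g^{-1}t^{-10^i}h^{-1}\,t^{2\cdot10^i}gt^{-2\cdot10^i}h\,t^{3\cdot10^i}g^{-1}t^{-3\cdot10^i}h^{-1}.$$ Then: (1) $c_{w_i}(\overline{w_i^n})=n$ for all $i\ge0$, $n\ge1$; (2) $c_{w_i^{-1}}(\overline{w_i^n})=0$ for all $i\ge0$, $n\ge1$; (3) $c_{w_j}(\overline{w_i^n})=c_{w_j^{-1}}(\overline{w_i^n})=0$ for all $j>i\ge0$, $n\ge1$; (4) $\overline{w_i}\in[G,G]$ for all $i\ge0$.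
   Context: $A$ is a group, $C\le A$, $\varphi:C\to A$ an injective homomorphism, $G=A*_C\varphi=\langle A,t\mid c=t^{-1}\varphi(c)t\ \forall c\in C\rangle$. Words are finite sequences of letters from $\{t,t^{-1}\}\cup(A\setminus\{1\})$; $\bar u$ is the element represented, $|u|$ the length, $u^{-1}$ the formal inverse word, $|x|$ the word length of $x\in G$. For a nonempty word $w$ and a word $u$, $|u|_w$ is the maximal number of pairwise non-overlapping occurrences of $w$ as a contiguous subword of $u$, and $c_w(x)=|x|-\min\{|v|-|v|_w:\bar v=x\}$. *)

From Stdlib Require Import List Arith.
Import ListNotations.

Record Grp := {
  gcar :> Type;
  gmul : gcar -> gcar -> gcar;
  gone : gcar;
  ginv : gcar -> gcar;
  gmulA : forall x y z, gmul x (gmul y z) = gmul (gmul x y) z;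
  gmul1 : forall x, gmul gone x = x;
  gmulV : forall x, gmul (ginv x) x = gone }.

Arguments gmul {g}. Arguments gone {g}. Arguments ginv {g}.

Inductive letter (A : Type) := LT | LTi | LA (a : A).
Arguments LT {A}. Arguments LTi {A}. Arguments LA {A} a.

Definition is_word (A : Grp) (u : list (letter A)) : Prop :=
  forall a, In (LA a) u -> a <> gone.

Definition linv (A : Grp) (x : letter A) : letter A :=
  match x with LT => LTi | LTi => LT | LA a => LA (ginv a) end.

Definition winv (A : Grp) (u : list (letter A)) : list (letter A) :=
  rev (map (linv A) u).

Definition is_subgroup (A : Grp) (C : A -> Prop) : Prop :=
  C gone /\ forall x y, C x -> C y -> C (gmul x (ginv y)).

(* phi : C -> A injective homomorphism (values of phi outside C irrelevant) *)
Definition is_inj_hom (A : Grp) (C : A -> Prop) (phi : A -> A) : Prop :=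
  (forall x y, C x -> C y -> phi (gmul x y) = gmul (phi x) (phi y)) /\
  (forall x y, C x -> C y -> phi x = phi y -> x = y).

(* u and v represent the same element of G = A *_C phi :
   congruence generated by the multiplication table of A, t t^-1 = 1,
   and c = t^{-1} phi(c) t for c in C. *)
Inductive hnn_eq (A : Grp) (C : A -> Prop) (phi : A -> A) :
  list (letter A) -> list (letter A) -> Prop :=
| he_refl u : hnn_eq A C phi u u
| he_sym u v : hnn_eq A C phi u v -> hnn_eq A C phi v u
| he_trans u v w : hnn_eq A C phi u v -> hnn_eq A C phi v w -> hnn_eq A C phi u w
| he_ctx x u v y : hnn_eq A C phi u v -> hnn_eq A C phi (x ++ u ++ y) (x ++ v ++ y)
| he_one : hnn_eq A C phi [LA gone] []
| he_mul a b : hnn_eq A C phi [LA a; LA b] [LA (gmul a b)]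
| he_tti : hnn_eq A C phi [LT; LTi] []
| he_tit : hnn_eq A C phi [LTi; LT] []
| he_conj c : C c -> hnn_eq A C phi [LA c] [LTi; LA (phi c); LT].

(* u contains k pairwise non-overlapping occurrences of w *)
Definition occ_k (A : Type) (w u : list (letter A)) (k : nat) : Prop :=
  exists (x0 : list (letter A)) (xs : list (list (letter A))),
    length xs = k /\ u = x0 ++ concat (map (fun x => w ++ x) xs).

Definition count_occ (A : Type) (w u : list (letter A)) (k : nat) : Prop :=
  occ_k A w u k /\ forall k', occ_k A w u k' -> k' <= k.

Definition is_min (P : nat -> Prop) (m : nat) : Prop :=
  P m /\ forall k, P k -> m <= k.

Definition word_length (A : Grp) (C : A -> Prop) (phi : A -> A)
  (x : list (letter A)) (L : nat) : Prop :=
  is_min (fun l => exists v, is_word A v /\ hnn_eq A C phi v x /\ length v = l) L.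

Definition cw_val (A : Grp) (C : A -> Prop) (phi : A -> A)
  (w x : list (letter A)) (n : nat) : Prop :=
  exists L M, word_length A C phi x L /\
    is_min (fun m => exists v k, is_word A v /\ hnn_eq A C phi v x /\
                       count_occ A w v k /\ m = length v - k) M /\
    n = L - M.

Definition in_commutator (A : Grp) (C : A -> Prop) (phi : A -> A)
  (x : list (letter A)) : Prop :=
  exists ps : list (list (letter A) * list (letter A)),
    hnn_eq A C phi x
      (concat (map (fun p => fst p ++ snd p ++ winv A (fst p) ++ winv A (snd p)) ps)).

Definition tp (A : Type) (k : nat) : list (letter A) := repeat LT k.
Definition tn (A : Type) (k : nat) : list (letter A) := repeat LTi k.

Definition w_i (A : Grp) (g h : A) (i : nat) : list (letter A) :=
  let k := 10 ^ i in
  tp A k ++ [LA g] ++ tn A k ++ [LA h] ++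
  tp A k ++ [LA (ginv g)] ++ tn A k ++ [LA (ginv h)] ++
  tp A (2 * k) ++ [LA g] ++ tn A (2 * k) ++ [LA h] ++
  tp A (3 * k) ++ [LA (ginv g)] ++ tn A (3 * k) ++ [LA (ginv h)].

Definition wpow (A : Type) (u : list (letter A)) (n : nat) : list (letter A) :=
  concat (repeat u n).

(* G acts on Britton normal forms [a t^e1 r1 ... t^ek rk] (coset representatives [r_j],
   no pinch [t^e 1 t^-e]); the action respects the defining relations, so every word
   representing x carries the trivial normal form to that of x.  Reading a word from the
   right, each t-letter changes the length of the normal form by one, and each run of
   equal signs of the final normal form has to be paid for by a letter of A (the lowest
   representative being nontrivial).  For x = w_i^n the sign pattern is
   (+K -K +K -K +2K -2K +3K -3K)^n with K = 10^i, so the bound 14Kn + 8n equals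
   |w_i^n|.  If the t-signs of u do not occur in this pattern, some t-letter of every
   occurrence of u in a representative is cancelled later, so each occurrence costs an
   extra letter and c_u(w_i^n) = 0; this applies to w_i^-1 (containing -3K +2K) and to
   w_j^(+-1) for j > i (containing runs longer than 3K). *)

From Pilot Require Import Defs.
From Stdlib Require Import List Arith Lia Bool.
From Stdlib Require Import ClassicalEpsilon FunctionalExtensionality PropExtensionality.
Import ListNotations.

Section GroupFacts.
Variable A : Grp.

Lemma gmul_cancel_l (a y z : A) : gmul a y = gmul a z -> y = z.
Proof.
  intro H. rewrite <- (gmul1 A y), <- (gmul1 A z), <- (gmulV A a), <- !gmulA, H.
  reflexivity.
Qed.

Lemma gmul1r (x : A) : gmul x gone = x.
Proof. apply (gmul_cancel_l (ginv x)). rewrite gmulA, gmulV, gmul1. reflexivity. Qed.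

Lemma gmulVr (x : A) : gmul x (ginv x) = gone.
Proof.
  apply (gmul_cancel_l (ginv x)). rewrite gmulA, gmulV, gmul1, gmul1r. reflexivity.
Qed.

Lemma ginvK (x : A) : ginv (ginv x) = x.
Proof. apply (gmul_cancel_l (ginv x)). rewrite gmulVr, gmulV. reflexivity. Qed.

Lemma ginv1 : ginv (gone : A) = gone.
Proof. rewrite <- (gmul1 A (ginv gone)). apply gmulVr. Qed.

Lemma ginv_eq1 (x : A) : ginv x = gone -> x = gone.
Proof. intro E. rewrite <- (ginvK x), E. apply ginv1. Qed.

Lemma ginvM (x y : A) : ginv (gmul x y) = gmul (ginv y) (ginv x).
Proof.
  apply (gmul_cancel_l (gmul x y)). rewrite gmulVr, !gmulA.
  rewrite <- (gmulA A x y (ginv y)), gmulVr, gmul1r, gmulVr. reflexivity.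
Qed.

Lemma gmulVKr (x y : A) : gmul (gmul x (ginv y)) y = x.
Proof. rewrite <- gmulA, gmulV, gmul1r. reflexivity. Qed.

Lemma gmulKr (x y : A) : gmul (gmul x y) (ginv y) = x.
Proof. rewrite <- gmulA, gmulVr, gmul1r. reflexivity. Qed.

End GroupFacts.

Section Britton.
Variables (A : Grp) (C : A -> Prop) (phi : A -> A).
Hypothesis HC : is_subgroup A C.
Hypothesis Hphi : is_inj_hom A C phi.

Local Notation "x * y" := (gmul x y).

Lemma C1 : C gone.
Proof. apply HC. Qed.

Lemma CV x : C x -> C (ginv x).
Proof. intro H. rewrite <- (gmul1 A (ginv x)). apply HC; auto using C1. Qed.

Lemma CM x y : C x -> C y -> C (x * y).
Proof. intros. rewrite <- (ginvK A y). apply HC; auto using CV. Qed.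

Lemma phiM x y : C x -> C y -> phi (x * y) = phi x * phi y.
Proof. apply Hphi. Qed.

Lemma phi1 : phi gone = gone.
Proof.
  apply (gmul_cancel_l A (phi gone)). rewrite <- phiM by apply C1.
  rewrite gmul1, gmul1r. reflexivity.
Qed.

Lemma phiV x : C x -> phi (ginv x) = ginv (phi x).
Proof.
  intro H. apply (gmul_cancel_l A (phi x)). rewrite gmulVr, <- phiM by auto using CV.
  rewrite gmulVr. apply phi1.
Qed.

(* [t] moves leftwards past [C], as [t c = phi(c) t], and [t^-1] past [phi(C)]. *)
Definition in_sub (b : bool) (y : A) : Prop :=
  if b then C y else exists c, C c /\ phi c = y.

Lemma in_sub1 b : in_sub b gone.
Proof. destruct b; simpl. apply C1. exists gone. split. apply C1. apply phi1. Qed.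

Lemma in_subV b x : in_sub b x -> in_sub b (ginv x).
Proof.
  destruct b; simpl. apply CV.
  intros [c [Hc <-]]. exists (ginv c). split. auto using CV. apply phiV; auto.
Qed.

Lemma in_subM b x y : in_sub b x -> in_sub b y -> in_sub b (x * y).
Proof.
  destruct b; simpl. apply CM.
  intros [c [Hc <-]] [d [Hd <-]]. exists (c * d). split. auto using CM. apply phiM; auto.
Qed.

Lemma in_sub_divC b x y : in_sub b (x * ginv y) -> in_sub b (y * ginv x).
Proof. intro H. apply in_subV in H. rewrite ginvM, ginvK in H. exact H. Qed.

Lemma not_in_subM b x y : ~ in_sub b x -> in_sub b y -> ~ in_sub b (x * y).
Proof.
  intros Hx Hy Hxy. apply Hx. rewrite <- (gmulKr A x y). apply in_subM; auto.
  apply in_subV; auto.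
Qed.

Lemma not_in_subV b x : ~ in_sub b x -> ~ in_sub b (ginv x).
Proof. intros Hx H. apply Hx. rewrite <- (ginvK A x). apply in_subV; auto. Qed.

(* A chosen representative of the right coset [in_sub b * x], equal to [1] on the
   subgroup itself. *)
Definition rep (b : bool) (x : A) : A :=
  if excluded_middle_informative (in_sub b x) then gone
  else epsilon (inhabits (gone : gcar A)) (fun r => in_sub b (x * ginv r)).

Lemma rep_spec b x : in_sub b (x * ginv (rep b x)).
Proof.
  unfold rep. destruct (excluded_middle_informative (in_sub b x)) as [H|H].
  - rewrite ginv1, gmul1r. exact H.
  - apply (epsilon_spec (inhabits (gone : gcar A)) (fun r => in_sub b (x * ginv r))).
    exists x. rewrite gmulVr. apply in_sub1.
Qed.

Lemma rep_eq b x y : in_sub b (x * ginv y) -> rep b x = rep b y.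
Proof.
  intro Hxy. assert (Hyx := in_sub_divC _ _ _ Hxy).
  assert (Hmul : forall u v, in_sub b (u * ginv v) -> in_sub b v -> in_sub b u).
  { intros u v Huv Hv. rewrite <- (gmulVKr A u v). apply in_subM; auto. }
  unfold rep.
  destruct (excluded_middle_informative (in_sub b x)) as [Hx|Hx];
  destruct (excluded_middle_informative (in_sub b y)) as [Hy|Hy];
    try reflexivity; [exfalso; eauto .. |].
  f_equal. apply functional_extensionality. intro r.
  apply propositional_extensionality.
  split; intro H; eapply Hmul; [| exact H | | exact H];
    rewrite ginvM, ginvK, gmulA, gmulVKr; assumption.
Qed.

Lemma rep_one b x : rep b x = gone <-> in_sub b x.
Proof.
  split.
  - intro H. pose proof (rep_spec b x) as Hs. rewrite H, ginv1, gmul1r in Hs. exact Hs.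
  - intro H. unfold rep. destruct (excluded_middle_informative (in_sub b x)); tauto.
Qed.

Lemma rep_idem b x : rep b (rep b x) = rep b x.
Proof. apply rep_eq, in_sub_divC, rep_spec. Qed.

Lemma rep_mul_sub b y x : in_sub b y -> rep b (y * x) = rep b x.
Proof. intro H. apply rep_eq. rewrite gmulKr. exact H. Qed.

Definition phinv (y : A) : A :=
  epsilon (inhabits (gone : gcar A)) (fun c => C c /\ phi c = y).

Lemma phinv_spec y : in_sub false y -> C (phinv y) /\ phi (phinv y) = y.
Proof. apply (epsilon_spec (inhabits (gone : gcar A)) (fun c => C c /\ phi c = y)). Qed.

Lemma phinv_phi c : C c -> phinv (phi c) = c.
Proof.
  intro Hc. destruct (phinv_spec (phi c)) as [H1 H2]. exists c; auto.
  apply Hphi; auto.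
Qed.

(* [t_b y = swap b y t_b] for [y] in [in_sub b], where [t_true = t], [t_false = t^-1]. *)
Definition swap (b : bool) (y : A) : A := if b then phi y else phinv y.

Lemma swap_in b y : in_sub b y -> in_sub (negb b) (swap b y).
Proof. destruct b; simpl; intro H. - exists y; auto. - apply phinv_spec; auto. Qed.

Lemma swapK b y : in_sub b y -> swap (negb b) (swap b y) = y.
Proof. destruct b; simpl; intro H. - apply phinv_phi; auto. - apply phinv_spec; auto. Qed.

(* Moving [t_b] leftwards through [x = y * rep b x] leaves [lead b x = swap b y]. *)
Definition lead (b : bool) (x : A) : A := swap b (x * ginv (rep b x)).

Arguments lead : simpl never.

Lemma lead_in b x : in_sub (negb b) (lead b x).
Proof. apply swap_in, rep_spec. Qed.

Lemma rep_lead b x : rep (negb b) (lead b x) = gone.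
Proof. apply rep_one, lead_in. Qed.

Lemma lead_of_sub b x : in_sub b x -> lead b x = swap b x.
Proof.
  intro H. unfold lead. apply rep_one in H. rewrite H, ginv1, gmul1r. reflexivity.
Qed.

Lemma lead_lead b x : lead (negb b) (lead b x) = x * ginv (rep b x).
Proof. rewrite lead_of_sub by apply lead_in. apply swapK, rep_spec. Qed.

(* A state [(a, [(b1, r1); ...; (bk, rk)])] stands for the Britton normal form
   [a t_b1 r1 ... t_bk rk]; the list is a stack whose top is the leftmost factor. *)
Definition state := (gcar A * list (bool * gcar A))%type.

Definition push (b : bool) (s : state) : state :=
  (lead b (fst s), (b, rep b (fst s)) :: snd s).

Definition act_t (b : bool) (s : state) : state :=
  match s with
  | (a, (e, r) :: L) =>
      if excluded_middle_informative (rep b a = gone /\ e = negb b)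
      then (lead b a * r, L) else push b s
  | _ => push b s
  end.

Arguments act_t : simpl never.

Definition act_letter (l : letter A) (s : state) : state :=
  match l with LT => act_t true s | LTi => act_t false s | LA x => (x * fst s, snd s) end.

Definition act (u : list (letter A)) (s : state) : state := fold_right act_letter s u.

Lemma act_app u v s : act (u ++ v) s = act u (act v s).
Proof. apply fold_right_app. Qed.

Definition pops (b : bool) (s : state) : Prop :=
  rep b (fst s) = gone /\ exists r L, snd s = (negb b, r) :: L.

Lemma act_t_pop b a r L :
  rep b a = gone -> act_t b (a, (negb b, r) :: L) = (lead b a * r, L).
Proof.
  intro H. unfold act_t.
  destruct (excluded_middle_informative _) as [_|N]; [reflexivity|tauto].
Qed.

Lemma act_t_push b s : ~ pops b s -> act_t b s = push b s.
Proof.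
  destruct s as [a [|[e r] L]]; intro N; unfold act_t; [reflexivity|].
  destruct (excluded_middle_informative _) as [[H1 H2]|_]; [|reflexivity].
  exfalso. apply N. subst e. split; [exact H1 | exists r, L; reflexivity].
Qed.

Lemma pops_push b s : pops (negb b) (push b s).
Proof.
  unfold pops, push; simpl. split. apply rep_lead.
  rewrite negb_involutive. eauto.
Qed.

(* No factor [t_b 1 t_(~b)]. *)
Fixpoint reduced (L : list (bool * gcar A)) : Prop :=
  match L with
  | (b1, r1) :: ((b2, _) :: _) as L' => (b1 <> b2 -> r1 <> gone) /\ reduced L'
  | _ => True
  end.

Definition valid (s : state) : Prop :=
  Forall (fun p => rep (fst p) (snd p) = snd p) (snd s) /\ reduced (snd s).

Lemma valid_push b s : valid s -> ~ pops b s -> valid (push b s).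
Proof.
  destruct s as [a L]. unfold valid, push; simpl. intros [HF HN] Hn. split.
  - constructor; auto. apply rep_idem.
  - destruct L as [|[e r1] L']; simpl; auto. split; auto.
    intros Hne Hr. apply Hn. split; auto. exists r1, L'. simpl.
    do 2 f_equal. destruct b, e; simpl in *; congruence.
Qed.

Lemma valid_pop b a r L a' : valid (a, (b, r) :: L) -> valid (a', L).
Proof.
  unfold valid; simpl. intros [HF HN]. inversion HF; subst. split; auto.
  destruct L as [|[]]; auto. destruct HN; auto.
Qed.

Lemma valid_act_t b s : valid s -> valid (act_t b s).
Proof.
  intro Hv. destruct (classic (pops b s)) as [[Hr [r [L HL]]]|N].
  - destruct s as [a L0]; cbn [fst snd] in Hr, HL; subst L0.
    rewrite act_t_pop by exact Hr. eapply valid_pop; eauto.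
  - rewrite act_t_push by exact N. apply valid_push; auto.
Qed.

Lemma valid_act u s : valid s -> valid (act u s).
Proof.
  induction u as [|[| |x] u IH]; simpl; auto using valid_act_t.
Qed.

Lemma act_t_pushK b s : act_t (negb b) (push b s) = s.
Proof.
  destruct s as [a L]. unfold push; cbn [fst snd].
  pose proof (act_t_pop (negb b) (lead b a) (rep b a) L (rep_lead b a)) as E.
  rewrite negb_involutive in E. rewrite E, lead_lead, gmulVKr. reflexivity.
Qed.

(* After a pop, the popped entry [(negb b, r)] cannot pop back: [r = 1] would be
   a pinch in the stack. *)
Lemma act_t_popK b a r L :
  valid (a, (negb b, r) :: L) -> rep b a = gone ->
  act_t (negb b) (lead b a * r, L) = (a, (negb b, r) :: L).
Proof.
  intros [HF HN] Ha. inversion HF as [|? ? Hr]; subst; simpl in Hr.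
  assert (Hrep : rep (negb b) (lead b a * r) = r).
  { rewrite rep_mul_sub by apply lead_in. exact Hr. }
  rewrite act_t_push.
  - unfold push; simpl. rewrite Hrep. f_equal.
    unfold lead at 1. rewrite Hrep, gmulKr, lead_of_sub by (apply rep_one; exact Ha).
    apply swapK, rep_one, Ha.
  - intros [Hr1 [r' [L' HL]]]; simpl in *. subst L. rewrite Hrep in Hr1.
    destruct HN as [HN _]. apply HN; auto. destruct b; discriminate.
Qed.

Lemma act_tK b s : valid s -> act_t (negb b) (act_t b s) = s.
Proof.
  intro Hv. destruct (classic (pops b s)) as [[Hr [r [L HL]]]|N].
  - destruct s as [a L0]; cbn [fst snd] in Hr, HL; subst L0.
    rewrite act_t_pop by exact Hr. apply act_t_popK; auto.
  - rewrite (act_t_push b s N). apply act_t_pushK.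
Qed.

Lemma act_conj c s : C c -> valid s ->
  act_t false (act_letter (LA (phi c)) (act_t true s)) = act_letter (LA c) s.
Proof.
  intros Hc Hv. simpl.
  destruct (classic (pops true s)) as [[Hr [r [L HL]]]|N].
  - destruct s as [a L0]; cbn [fst snd] in Hr, HL; subst L0.
    assert (Ha : C a) by (apply (rep_one true); exact Hr).
    rewrite act_t_pop by exact Hr. simpl.
    rewrite lead_of_sub by exact Ha. simpl. rewrite gmulA, <- phiM by auto.
    replace (phi (c * a)) with (lead true (c * a))
      by (rewrite lead_of_sub; [reflexivity | apply CM; auto]).
    apply (act_t_popK true); [exact Hv | apply rep_one, CM; auto].
  - rewrite (act_t_push true s N). destruct s as [a L]. unfold push; cbn [fst snd].
    assert (Hca : C (c * (a * ginv (rep true a)))) by (apply CM; auto; apply (rep_spec true)).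
    unfold lead at 1; simpl. rewrite <- phiM by (auto; apply (rep_spec true)).
    replace false with (negb true) by reflexivity.
    rewrite act_t_pop by (apply rep_one; exists (c * (a * ginv (rep true a))); auto).
    rewrite lead_of_sub by (exists (c * (a * ginv (rep true a))); auto). simpl.
    rewrite phinv_phi by exact Hca. rewrite <- gmulA, gmulVKr. reflexivity.
Qed.

Theorem act_hnn_eq u v s : hnn_eq A C phi u v -> valid s -> act u s = act v s.
Proof.
  intro H. revert s. induction H; intros s Hs.
  - reflexivity.
  - symmetry. auto.
  - rewrite IHhnn_eq1, IHhnn_eq2; auto.
  - rewrite !act_app. f_equal. apply IHhnn_eq. apply valid_act. exact Hs.
  - destruct s; simpl. rewrite gmul1. reflexivity.
  - destruct s; simpl. rewrite gmulA. reflexivity.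
  - apply (act_tK false). exact Hs.
  - apply (act_tK true). exact Hs.
  - symmetry. apply act_conj; auto.
Qed.

End Britton.

Section Words.
Variable X : Type.

Definition tl (b : bool) : letter X := if b then LT else LTi.

Fixpoint tsigns (u : list (letter X)) : list bool :=
  match u with
  | [] => []
  | LT :: u' => true :: tsigns u'
  | LTi :: u' => false :: tsigns u'
  | LA _ :: u' => tsigns u'
  end.

Fixpoint a_count (u : list (letter X)) : nat :=
  match u with [] => 0 | LA _ :: u' => S (a_count u') | _ :: u' => a_count u' end.

Definition t_count (u : list (letter X)) : nat := length (tsigns u).

Lemma length_t_a u : length u = t_count u + a_count u.
Proof. unfold t_count. induction u as [|[] u IH]; simpl; lia. Qed.

Lemma tsigns_app u v : tsigns (u ++ v) = tsigns u ++ tsigns v.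
Proof. induction u as [|[] u IH]; simpl; try rewrite IH; reflexivity. Qed.

Lemma a_count_app u v : a_count (u ++ v) = a_count u + a_count v.
Proof. induction u as [|[] u IH]; simpl; try rewrite IH; reflexivity. Qed.

Lemma t_count_app u v : t_count (u ++ v) = t_count u + t_count v.
Proof. unfold t_count. rewrite tsigns_app, length_app. reflexivity. Qed.

Lemma tsigns_repeat b k : tsigns (repeat (tl b) k) = repeat b k.
Proof. induction k; simpl; auto. rewrite IHk. destruct b; reflexivity. Qed.

Lemma a_count_repeat b k : a_count (repeat (tl b) k) = 0.
Proof. induction k; simpl; auto. destruct b; simpl; auto. Qed.

Lemma tsigns_tp k : tsigns (tp X k) = repeat true k.
Proof. exact (tsigns_repeat true k). Qed.

Lemma tsigns_tn k : tsigns (tn X k) = repeat false k.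
Proof. exact (tsigns_repeat false k). Qed.

Lemma a_count_tp k : a_count (tp X k) = 0.
Proof. exact (a_count_repeat true k). Qed.

Lemma a_count_tn k : a_count (tn X k) = 0.
Proof. exact (a_count_repeat false k). Qed.

Lemma occ_k_0 (u v : list (letter X)) : occ_k X u v 0.
Proof. exists v, []. split; simpl; auto using app_nil_r. Qed.

Lemma occ_k_length (u v : list (letter X)) k : occ_k X u v k -> k * length u <= length v.
Proof.
  intros [x0 [xs [Hk Hv]]]. subst v k. rewrite length_app.
  enough (length xs * length u <= length (concat (map (fun x => u ++ x) xs))) by lia.
  induction xs as [|x xs IH]; simpl. lia. rewrite !length_app. lia.
Qed.

Lemma length_wpow (u : list (letter X)) n : length (wpow X u n) = n * length u.
Proof. unfold wpow. induction n as [|n IH]; simpl; auto. rewrite length_app, IH. lia. Qed.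

Lemma occ_k_pow (u : list (letter X)) n : occ_k X u (wpow X u n) n.
Proof.
  exists [], (repeat [] n). split. apply repeat_length.
  unfold wpow. induction n as [|n IH]; simpl in *; auto. rewrite app_nil_r, IH. reflexivity.
Qed.

Lemma count_occ_exists (u v : list (letter X)) :
  1 <= length u -> exists k, Defs.count_occ X u v k.
Proof.
  intro Hu.
  assert (Hmax : forall B, (forall k, occ_k X u v k -> k <= B) ->
            exists m, occ_k X u v m /\ forall k, occ_k X u v k -> k <= m).
  { induction B as [|B IH]; intro HB.
    - exists 0. split; [apply occ_k_0 | exact HB].
    - destruct (classic (occ_k X u v (S B))) as [HP|HP]; [exists (S B); auto|].
      apply IH. intros k Hk. specialize (HB k Hk).
      destruct (Nat.eq_dec k (S B)); subst; [contradiction|lia]. }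
  apply (Hmax (length v)). intros k Hk. apply occ_k_length in Hk. nia.
Qed.

End Words.

Arguments tl {X} b.

Section HNNEq.
Variables (A : Grp) (C : A -> Prop) (phi : A -> A).

Lemma hnn_eq_app_l x u v : hnn_eq A C phi u v -> hnn_eq A C phi (x ++ u) (x ++ v).
Proof.
  intro H. pose proof (he_ctx A C phi x u v [] H) as H'. rewrite !app_nil_r in H'. exact H'.
Qed.

Lemma hnn_eq_app_r u v y : hnn_eq A C phi u v -> hnn_eq A C phi (u ++ y) (v ++ y).
Proof. exact (he_ctx A C phi [] u v y). Qed.

Lemma hnn_eq_del x u y : hnn_eq A C phi u [] -> hnn_eq A C phi (x ++ u ++ y) (x ++ y).
Proof. exact (he_ctx A C phi x u [] y). Qed.

Lemma hnn_eq_tlV b : hnn_eq A C phi [tl b; tl (negb b)] [].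
Proof. destruct b; [apply he_tti | apply he_tit]. Qed.

Lemma hnn_eq_repeat_tlV b k :
  hnn_eq A C phi (repeat (tl b) k ++ repeat (tl (negb b)) k) [].
Proof.
  induction k as [|k IH]; [apply he_refl|].
  replace (repeat (tl b) (S k) ++ repeat (tl (negb b)) (S k))
    with (repeat (@tl A b) k ++ [tl b; tl (negb b)] ++ repeat (tl (negb b)) k).
  - eapply he_trans; [apply hnn_eq_del, hnn_eq_tlV | exact IH].
  - simpl repeat. rewrite (repeat_cons k (tl b)), <- app_assoc. reflexivity.
Qed.

Lemma hnn_eq_gmulV (x : A) : hnn_eq A C phi [LA (ginv x); LA x] [].
Proof. eapply he_trans; [apply he_mul|]. rewrite gmulV. apply he_one. Qed.

Lemma hnn_eq_conjV k (x : A) :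
  hnn_eq A C phi (tp A k ++ [LA (ginv x)] ++ tn A k ++ tp A k ++ [LA x] ++ tn A k) [].
Proof.
  replace (tp A k ++ [LA (ginv x)] ++ tn A k ++ tp A k ++ [LA x] ++ tn A k)
    with ((tp A k ++ [LA (ginv x)]) ++ (repeat (tl false) k ++ repeat (tl (negb false)) k)
          ++ ([LA x] ++ tn A k))
    by (rewrite <- !app_assoc; reflexivity).
  eapply he_trans; [apply hnn_eq_del, hnn_eq_repeat_tlV|].
  replace ((tp A k ++ [LA (ginv x)]) ++ [LA x] ++ tn A k)
    with (tp A k ++ [LA (ginv x); LA x] ++ tn A k) by (rewrite <- app_assoc; reflexivity).
  eapply he_trans; [apply hnn_eq_del, hnn_eq_gmulV|].
  exact (hnn_eq_repeat_tlV true k).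
Qed.

Lemma t_word_eq_power q : a_count A q = 0 -> exists b j, hnn_eq A C phi q (repeat (tl b) j).
Proof.
  induction q as [|l q IH]; intro H.
  - exists true, 0. apply he_refl.
  - assert (Hl : exists c, l = tl c)
      by (destruct l; simpl in H; try discriminate; [exists true | exists false]; reflexivity).
    destruct Hl as [c ->].
    destruct (IH ltac:(destruct c; exact H)) as [b [j Hj]].
    assert (H1 := hnn_eq_app_l [tl c] _ _ Hj). simpl in H1.
    destruct (Bool.bool_dec c b) as [<-|E]; [exists c, (S j); exact H1|].
    destruct j as [|j]; [exists c, 1; exact H1|].
    exists b, j. eapply he_trans; [exact H1|].
    replace c with (negb b) by (destruct b, c; cbn; congruence).
    apply (hnn_eq_app_r [tl (negb b); tl b] [] (repeat (tl b) j)).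
    rewrite <- (negb_involutive b) at 2. apply hnn_eq_tlV.
Qed.

End HNNEq.

Definition infix {T : Type} (p l : list T) : Prop := exists x y, l = x ++ p ++ y.

Lemma infix_trans {T : Type} (p q l : list T) : infix p q -> infix q l -> infix p l.
Proof.
  intros [x [y ->]] [x' [y' ->]]. exists (x' ++ x), (y ++ y'). rewrite <- !app_assoc. reflexivity.
Qed.

Lemma skipn_S_of_cons {T : Type} p (l l' : list T) x :
  skipn p l = x :: l' -> skipn (S p) l = l' /\ p < length l.
Proof.
  revert l. induction p; intros l H.
  - simpl in H. subst. simpl. split; auto. lia.
  - destruct l; simpl in H. discriminate. destruct (IHp l H). split; auto. simpl. lia.
Qed.

Section PureTWords.
Variables (A : Grp) (C : A -> Prop) (phi : A -> A).
Hypothesis HC : is_subgroup A C.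
Hypothesis Hphi : is_inj_hom A C phi.

Local Notation rep := (rep A C phi).
Local Notation act := (act A C phi).
Local Notation act_t := (act_t A C phi).
Local Notation push := (push A C phi).
Local Notation pops := (pops A C phi).

Lemma act_tl b v s : act (tl b :: v) s = act_t b (act v s).
Proof. destruct b; reflexivity. Qed.

Lemma act_t_cases b s :
  (exists r, snd s = (negb b, r) :: snd (act_t b s) /\ rep b (fst s) = gone) \/
  (act_t b s = push b s /\ ~ pops b s).
Proof.
  destruct (classic (pops b s)) as [[Hr [r [L HL]]]|N].
  - left. exists r. destruct s as [a L0]. cbn [fst snd] in *. subst L0.
    rewrite act_t_pop by exact Hr. auto.
  - right. split; auto. apply act_t_push. exact N.
Qed.

Lemma act_repeat_tl b j s : exists Q p,
  snd (act (repeat (tl b) j) s) = Q ++ skipn p (snd s) /\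
  Forall (fun x => fst x = b) Q /\ length Q + p = j /\ p <= length (snd s) /\
  (p = 0 \/ exists r rest, snd s = (negb b, r) :: rest).
Proof.
  induction j as [|j IH].
  - exists [], 0. simpl. repeat split; auto. lia.
  - destruct IH as [Q [p [H1 [H2 [H3 [H4 H5]]]]]].
    simpl repeat. rewrite act_tl.
    destruct (act_t_cases b (act (repeat (tl b) j) s)) as [[r [E1 E2]] | [E1 E2]].
    + rewrite H1 in E1. destruct Q as [|y Q'].
      * simpl in E1. destruct (skipn_S_of_cons _ _ _ _ E1) as [E3 E4].
        exists [], (S p). rewrite app_nil_l, E3. repeat split; auto; simpl in *; try lia.
        right. destruct p.
        -- simpl in E1. eauto.
        -- destruct H5 as [H5|H5]; [lia | exact H5].
      * exfalso. injection E1 as -> _. inversion H2 as [|? ? Hy].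
        destruct b; discriminate.
    + rewrite E1. unfold push. cbn [snd]. rewrite H1.
      exists ((b, rep b (fst (act (repeat (tl b) j) s))) :: Q), p. simpl. repeat split; auto.
Qed.

Lemma act_repeat_tl_fixed b j s : snd (act (repeat (tl b) j) s) = snd s -> j = 0.
Proof.
  intro H. destruct (act_repeat_tl b j s) as [Q [p [H1 [H2 [H3 [H4 H5]]]]]].
  rewrite H1 in H. assert (Hl : length Q = p).
  { apply (f_equal (@length _)) in H. rewrite length_app, length_skipn in H. lia. }
  destruct H5 as [H5 | [r [rest H5]]]; [lia|].
  destruct Q as [|y Q']; [simpl in Hl, H3; lia|].
  rewrite H5 in H. simpl in H. injection H as Hy _.
  inversion H2 as [|? ? Hyb]. rewrite Hy in Hyb. destruct b; discriminate.
Qed.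

(* A word in [t] alone equals a power of [t] in [G], and nonzero powers change the stack. *)
Lemma act_t_word_fixed q s : valid A C phi s -> a_count A q = 0 ->
  snd (act q s) = snd s -> act q s = s.
Proof.
  intros Hv Hq Hs. destruct (t_word_eq_power A C phi q Hq) as [b [j Hj]].
  rewrite (act_hnn_eq A C phi HC Hphi _ _ _ Hj Hv) in *.
  rewrite (act_repeat_tl_fixed b j s Hs). reflexivity.
Qed.

End PureTWords.

Fixpoint runs (l : list bool) : nat :=
  match l with
  | [] => 0
  | [_] => 1
  | x :: ((y :: _) as l') => (if Bool.eqb x y then 0 else 1) + runs l'
  end.

Definition last_rep_ne1 (A : Grp) (E : list (bool * gcar A)) : Prop :=
  forall Z x, E = Z ++ [x] -> snd x <> gone.

Lemma last_rep_ne1_app A (E E' : list (bool * gcar A)) :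
  last_rep_ne1 A E -> last_rep_ne1 A E' -> last_rep_ne1 A (E ++ E').
Proof.
  intros H H' Z x HZ. destruct E' as [|y E'] using rev_ind.
  - rewrite app_nil_r in HZ. exact (H Z x HZ).
  - rewrite app_assoc in HZ. apply app_inj_tail in HZ as [_ <-]. exact (H' E' y eq_refl).
Qed.

Section LengthBound.
Variables (A : Grp) (C : A -> Prop) (phi : A -> A).
Hypothesis HC : is_subgroup A C.
Hypothesis Hphi : is_inj_hom A C phi.

Local Notation rep := (rep A C phi).
Local Notation act := (act A C phi).
Local Notation act_t := (act_t A C phi).
Local Notation push := (push A C phi).
Local Notation pops := (pops A C phi).
Local Notation valid := (valid A C phi).

Definition state1 : state A := (gone, []).

Lemma valid_state1 : valid state1.
Proof. split; simpl; auto. Qed.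

Definition height (s : state A) : nat := length (snd s).
Definition bottom (L : nat) (s : state A) := skipn (height s - L) (snd s).

Lemma bottom_full L s : height s = L -> bottom L s = snd s.
Proof. intro H. unfold bottom. replace (height s - L) with 0 by lia. reflexivity. Qed.

(* The stack of the normal form [Efin] of the element represented by the whole word.
   Reading that word from the right, [settled v L] says that once the suffix [v]
   has been read, the [L] lowest stack entries are already those of [Efin]. *)
Variable Efin : list (bool * gcar A).

Definition settled (v : list (letter A)) (L : nat) : Prop :=
  L <= height (act v state1) /\ exists Y, Efin = Y ++ bottom L (act v state1).

(* The letter [l] pushes the entry of [Efin] at height [L]. *)
Definition settles (l : letter A) (v : list (letter A)) (L : nat) : Prop :=
  exists b, l = tl b /\ act (l :: v) state1 = push b (act v state1) /\
    ~ pops b (act v state1) /\ height (act (l :: v) state1) = L /\ 1 <= L /\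
    settled v (L - 1) /\ exists Y, Efin = Y ++ snd (act (l :: v) state1).

Lemma settled_nil L : settled [] L -> L = 0.
Proof. intros [H _]. unfold height in H. simpl in H. lia. Qed.

Lemma settled_full v : snd (act v state1) = Efin -> settled v (length Efin).
Proof.
  intro H. split.
  - unfold height. rewrite H. auto.
  - exists []. rewrite bottom_full; unfold height; rewrite H; reflexivity.
Qed.

Lemma step_t b v L : settled (tl b :: v) L ->
  settles (tl b) v L \/
  (settled v L /\ bottom L (act (tl b :: v) state1) = bottom L (act v state1)).
Proof.
  intros [HL [Y HY]]. rewrite act_tl in *.
  remember (act v state1) as s eqn:Hs. unfold settles, settled. rewrite act_tl, <- Hs.
  destruct (act_t_cases A C phi b s) as [[r [H1 H2]] | [H1 H2]].
  - right.
    assert (E : height s = S (height (act_t b s))) by (unfold height; rewrite H1; reflexivity).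
    assert (Eb : bottom L s = bottom L (act_t b s)).
    { unfold bottom. rewrite E, H1. replace (S (height (act_t b s)) - L)
        with (S (height (act_t b s) - L)) by lia. reflexivity. }
    split; [split|]; [lia | exists Y; rewrite HY, Eb; reflexivity | symmetry; exact Eb].
  - assert (Hp : snd (act_t b s) = (b, rep b (fst s)) :: snd s) by (rewrite H1; reflexivity).
    assert (Hht : height (act_t b s) = S (height s)) by (unfold height; rewrite Hp; reflexivity).
    destruct (Nat.eq_dec (height (act_t b s)) L) as [E|E].
    + left. exists b. repeat split; auto; try lia.
      * exists (Y ++ [(b, rep b (fst s))]). rewrite bottom_full by lia.
        rewrite HY, bottom_full by auto. rewrite Hp, <- app_assoc. reflexivity.
      * exists Y. rewrite HY, bottom_full; auto.
    + right.
      assert (Eb : bottom L (act_t b s) = bottom L s).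
      { unfold bottom. rewrite Hht, Hp. replace (S (height s) - L)
          with (S (height s - L)) by lia. reflexivity. }
      split; [split|]; [lia | exists Y; rewrite HY, Eb; reflexivity | exact Eb].
Qed.

Lemma step l v L : settled (l :: v) L ->
  settles l v L \/ (settled v L /\ bottom L (act (l :: v) state1) = bottom L (act v state1)).
Proof.
  intro H. destruct l as [| |x].
  - apply (step_t true). exact H.
  - apply (step_t false). exact H.
  - right. split; [exact H | reflexivity].
Qed.

Lemma settled_prefix a b L : settled (a ++ b) L -> exists L', settled b L' /\
  L <= t_count A a + L' /\
  (t_count A a + L' = L -> exists P,
     snd (act (a ++ b) state1) = P ++ snd (act b state1) /\ map fst P = tsigns A a) /\
  (t_count A a + L' = L -> 1 <= t_count A a -> height (act (a ++ b) state1) = L).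
Proof.
  revert L. induction a as [|l a IH]; intros L H.
  - exists L. simpl. split; [exact H|]. split; [lia|].
    split; [intros _; exists []; auto | unfold t_count; simpl; lia].
  - simpl app in H. destruct (step l (a ++ b) L H) as [Hs | [Hset Hbot]].
    + destruct Hs as [b0 [-> [Hpush [_ [Hht [HL1 [Hset _]]]]]]].
      destruct (IH _ Hset) as [L' [H1 [H2 [H3 H4]]]].
      assert (Hnt : t_count A (tl b0 :: a) = S (t_count A a)) by (destruct b0; reflexivity).
      exists L'. rewrite Hnt. simpl app. split; [exact H1|]. split; [lia|].
      split; [intro E | intros _ _; exact Hht].
      destruct (H3 ltac:(lia)) as [P [HP1 HP2]].
      exists ((b0, rep b0 (fst (act (a ++ b) state1))) :: P). rewrite Hpush.
      unfold push. cbn [snd]. rewrite HP1. split; [reflexivity|].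
      simpl. rewrite HP2. destruct b0; reflexivity.
    + destruct (IH _ Hset) as [L' [H1 [H2 [H3 H4]]]].
      exists L'. split; [exact H1|].
      destruct l as [| |x]; unfold t_count in *; simpl in *; [lia | lia |].
      split; [exact H2 | split; [exact H3 | exact H4]].
Qed.

Lemma settled_le_t_count v L : settled v L -> L <= t_count A v.
Proof.
  intro H. rewrite <- (app_nil_r v) in H.
  destruct (settled_prefix v [] L H) as [L' [H1 [H2 _]]].
  apply settled_nil in H1. lia.
Qed.

Lemma settled_occurrence u b L : ~ infix (tsigns A u) (map fst Efin) -> 1 <= t_count A u ->
  settled (u ++ b) L -> exists L', settled b L' /\ L + 1 <= t_count A u + L'.
Proof.
  intros Hni Hnt H. destruct (settled_prefix u b L H) as [L' [H1 [H2 [H3 H4]]]].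
  exists L'. split; auto.
  destruct (Nat.eq_dec (t_count A u + L') L) as [E|E]; [|lia].
  exfalso. apply Hni. destruct (H3 E) as [P [HP1 HP2]]. specialize (H4 E Hnt).
  destruct H as [_ [Y HY]]. rewrite bottom_full, HP1 in HY by auto.
  exists (map fst Y), (map fst (snd (act b state1))). rewrite HY, !map_app, HP2. reflexivity.
Qed.

Lemma settled_occurrences u x0 xs L : ~ infix (tsigns A u) (map fst Efin) ->
  1 <= t_count A u -> settled (x0 ++ concat (map (fun x => u ++ x) xs)) L ->
  L + length xs <= t_count A (x0 ++ concat (map (fun x => u ++ x) xs)).
Proof.
  intros Hni Hnt H. destruct (settled_prefix x0 _ L H) as [L1 [H1 [H2 _]]].
  rewrite t_count_app.
  enough (L1 + length xs <= t_count A (concat (map (fun x => u ++ x) xs))) by lia.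
  clear H H2. revert L1 H1. induction xs as [|x xs IH]; intros K HK.
  - apply settled_nil in HK. simpl. lia.
  - simpl in *. rewrite <- app_assoc in HK.
    destruct (settled_occurrence u _ K Hni Hnt HK) as [K1 [H1 H2]].
    destruct (settled_prefix x _ K1 H1) as [K2 [H3 [H4 _]]].
    specialize (IH K2 H3). rewrite !t_count_app. lia.
Qed.

Hypothesis Efin_last : last_rep_ne1 A Efin.

(* [owes v L]: the entry of [Efin] just above the [L] settled ones is pushed, from a
   state reached by t-letters only, across a change of sign (or onto the empty
   stack); this requires a letter of [A] in [v] that is not yet accounted for. *)
Definition owes (v : list (letter A)) (L : nat) : Prop :=
  exists Y q b Z, Y = act q (act v state1) /\ a_count A q = 0 /\
    snd Y = bottom L (act v state1) /\ Efin = Z ++ (b, rep b (fst Y)) :: snd Y /\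
    ~ pops b Y /\ (snd Y = [] \/ exists r rest, snd Y = (negb b, r) :: rest).

Lemma owes_nil : ~ owes [] 0.
Proof.
  intros [Y [q [b [Z [H1 [H2 [H3 [H4 _]]]]]]]].
  assert (HY : Y = state1).
  { subst Y. apply (act_t_word_fixed A C phi HC Hphi); auto. apply valid_state1. }
  rewrite HY in H4. apply (Efin_last Z _ H4). apply (rep_one A C phi HC Hphi), in_sub1; auto.
Qed.

Lemma owes_settles l v L : settles l v L -> ~ owes (l :: v) L.
Proof.
  intros [b0 [Hl [Hpush [_ [Hht _]]]]] [Y [q [b [Z [H1 [H2 [H3 [_ [H5 H6]]]]]]]]].
  rewrite bottom_full in H3 by auto.
  assert (HY : Y = act (l :: v) state1).
  { subst Y. apply (act_t_word_fixed A C phi HC Hphi); auto.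
    apply valid_act; auto. apply valid_state1. }
  rewrite HY, Hpush in H5, H6. unfold push in H6. cbn [snd] in H6.
  destruct H6 as [H6 | [r [rest H6]]]; [discriminate|]. injection H6 as Eb _ _.
  apply H5. subst b0. rewrite <- (negb_involutive b) at 1. apply pops_push; auto.
Qed.

Lemma owes_t b v L : owes (tl b :: v) L ->
  bottom L (act (tl b :: v) state1) = bottom L (act v state1) -> owes v L.
Proof.
  intros [Y [q [b1 [Z [H1 [H2 [H3 H4]]]]]]] Hbot.
  exists Y, (q ++ [tl b]), b1, Z. rewrite act_app, a_count_app, H2, <- Hbot.
  split; [exact H1 | split; [destruct b; reflexivity | split; [exact H3 | exact H4]]].
Qed.

(* A push that settles the bottom entry of [Efin] or starts a new run in it needs a
   letter of [A] further to the right; [p] records such a pending letter. *)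
Lemma a_count_ge_runs v L (p : bool) : settled v L -> (p = true -> owes v L) ->
  runs (map fst (bottom L (act v state1))) + (if p then 1 else 0) <= a_count A v.
Proof.
  revert L p. induction v as [|l v IH]; intros L p H Hp.
  - pose proof (settled_nil L H). subst L. destruct p; simpl; [|lia].
    exfalso. exact (owes_nil (Hp eq_refl)).
  - destruct (step l v L H) as [Hs | [Hset Hbot]].
    + assert (p = false) as ->.
      { destruct p; auto. exfalso. exact (owes_settles l v L Hs (Hp eq_refl)). }
      destruct Hs as [b0 [-> [Hpush [Hnp [Hht [HL1 [Hset [Yf HYf]]]]]]]].
      set (s' := act v state1) in *.
      set (p' := match snd s' with [] => true | (e, _) :: _ => negb (Bool.eqb b0 e) end).
      assert (Hht' : height s' = L - 1).
      { unfold height in *. rewrite Hpush in Hht. simpl in Hht. lia. }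
      specialize (IH (L - 1) p' Hset).
      rewrite bottom_full in IH by auto. rewrite bottom_full by auto.
      rewrite Hpush. unfold push. cbn [snd map fst].
      replace (a_count A (tl b0 :: v)) with (a_count A v) by (destruct b0; reflexivity).
      assert (Hruns : runs (b0 :: map fst (snd s')) =
                        (if p' then 1 else 0) + runs (map fst (snd s'))).
      { unfold p'. destruct (snd s') as [|[e r] rest]; [reflexivity|]. simpl.
        destruct (Bool.eqb b0 e); reflexivity. }
      rewrite Hruns. enough (runs (map fst (snd s')) + (if p' then 1 else 0) <= a_count A v)
        by lia.
      apply IH. intro Ep'. exists s', [], b0, Yf.
        repeat split; auto; [rewrite bottom_full; auto | rewrite HYf, Hpush; reflexivity |].
        unfold p' in Ep'. destruct (snd s') as [|[e r] rest]; auto. right. exists r, rest.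
        do 2 f_equal. destruct b0, e; simpl in *; congruence.
    + rewrite Hbot. destruct l as [| |x].
      * apply IH; auto. intro Ep. exact (owes_t true v L (Hp Ep) Hbot).
      * apply IH; auto. intro Ep. exact (owes_t false v L (Hp Ep) Hbot).
      * assert (runs (map fst (bottom L (act v state1))) + 0 <= a_count A v)
          by (apply (IH L false); auto; discriminate).
        simpl. destruct p; lia.
Qed.

Theorem length_ge_normal_form v : snd (act v state1) = Efin ->
  length Efin + runs (map fst Efin) <= length v.
Proof.
  intro H. pose proof (settled_full v H) as HS.
  pose proof (settled_le_t_count v _ HS).
  pose proof (a_count_ge_runs v _ false HS ltac:(discriminate)) as HA.
  rewrite bottom_full, H in HA by (unfold height; rewrite H; auto).
  rewrite length_t_a. lia.
Qed.

Theorem length_ge_normal_form_occ u x0 xs : ~ infix (tsigns A u) (map fst Efin) ->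
  1 <= t_count A u -> snd (act (x0 ++ concat (map (fun x => u ++ x) xs)) state1) = Efin ->
  length Efin + length xs + runs (map fst Efin) <=
    length (x0 ++ concat (map (fun x => u ++ x) xs)).
Proof.
  intros Hni Hnt H. pose proof (settled_full _ H) as HS.
  pose proof (settled_occurrences u x0 xs _ Hni Hnt HS).
  pose proof (a_count_ge_runs _ _ false HS ltac:(discriminate)) as HA.
  rewrite bottom_full, H in HA by (unfold height; rewrite H; auto).
  rewrite (length_t_a _ (x0 ++ _)). lia.
Qed.

End LengthBound.

Lemma runs_repeat_app b k l : 1 <= k -> runs (repeat b k ++ l) = runs (b :: l).
Proof.
  intro H. induction k as [|k IH]; [lia|].
  destruct k; [reflexivity|].
  change (repeat b (S (S k)) ++ l) with (b :: (repeat b (S k) ++ l)).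
  rewrite <- IH by lia. simpl. rewrite Bool.eqb_reflx. reflexivity.
Qed.

Lemma runs_cons_repeat b c k l : 1 <= k ->
  runs (b :: repeat c k ++ l) = (if Bool.eqb b c then 0 else 1) + runs (c :: l).
Proof. intro H. destruct k; [lia|]. rewrite <- (runs_repeat_app c (S k) l H). reflexivity. Qed.

Definition wsigns (K : nat) : list bool :=
  repeat true K ++ repeat false K ++ repeat true K ++ repeat false K ++
  repeat true (2 * K) ++ repeat false (2 * K) ++ repeat true (3 * K) ++ repeat false (3 * K).

Lemma length_wsigns K : length (wsigns K) = 14 * K.
Proof. unfold wsigns. rewrite !length_app, !repeat_length. lia. Qed.

Lemma wsigns_app K r : wsigns K ++ r =
  repeat true K ++ repeat false K ++ repeat true K ++ repeat false K ++
  repeat true (2 * K) ++ repeat false (2 * K) ++ repeat true (3 * K) ++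
  repeat false (3 * K) ++ r.
Proof. unfold wsigns. rewrite <- !app_assoc. reflexivity. Qed.

Lemma runs_wsigns_app K r : 1 <= K -> runs (wsigns K ++ r) = 7 + runs (false :: r).
Proof.
  intro HK. rewrite wsigns_app, runs_repeat_app by lia.
  do 7 (rewrite runs_cons_repeat by lia). reflexivity.
Qed.

Lemma runs_wsigns_pow K n : 1 <= K -> runs (concat (repeat (wsigns K) n)) = 8 * n.
Proof.
  intro HK. induction n as [|n IH]; [reflexivity|].
  simpl concat. rewrite runs_wsigns_app by exact HK. destruct n as [|n]; [reflexivity|].
  simpl concat in *. rewrite wsigns_app, runs_cons_repeat by exact HK.
  rewrite <- (runs_repeat_app true K) by exact HK. rewrite <- wsigns_app, IH. simpl. lia.
Qed.

Lemma wsigns_pow_head K n : 1 <= K ->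
  concat (repeat (wsigns K) n) = [] \/ exists L, concat (repeat (wsigns K) n) = true :: L.
Proof.
  intro HK. destruct n; [left; reflexivity|]. right. simpl. rewrite wsigns_app.
  destruct K; [lia|]. simpl. eauto.
Qed.

Lemma repeat_app_head {T : Type} (c : T) k l : 1 <= k -> exists l', repeat c k ++ l = c :: l'.
Proof. intro H. destruct k; [lia|]. simpl. eauto. Qed.

Lemma infix_skip_run c d L x p : (exists z, p = negb c :: z) -> x ++ p = repeat c d ++ L ->
  exists x', x' ++ p = L.
Proof.
  intros [z ->]. revert x. induction d as [|d IH]; intros x H; [eauto|].
  destruct x as [|e x]; simpl in H; injection H; intros.
  - destruct c; discriminate.
  - eapply IH; eauto.
Qed.

Lemma repeat_prefix_le c a r y L : (L = [] \/ exists L', L = negb c :: L') ->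
  repeat c a ++ y = repeat c r ++ L -> a <= r.
Proof.
  intro HL. revert r. induction a as [|a IH]; intros r H; [lia|].
  destruct r as [|r].
  - simpl in H. destruct HL as [-> | [L' ->]]; [discriminate|].
    injection H; intros. destruct c; discriminate.
  - simpl in H. injection H as H. apply IH in H. lia.
Qed.

Lemma repeat_app_inj c a r z z' :
  repeat c a ++ negb c :: z = repeat c r ++ negb c :: z' -> a = r /\ z = z'.
Proof.
  revert r. induction a as [|a IH]; intros [|r] H; simpl in H.
  - injection H; auto.
  - injection H; intros; destruct c; discriminate.
  - injection H; intros; destruct c; discriminate.
  - injection H as H. destruct (IH r H). auto.
Qed.

Lemma infix_run_split c r L x y a : 1 <= a -> (L = [] \/ exists L', L = negb c :: L') ->
  x ++ repeat c a ++ y = repeat c r ++ L ->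
  a <= r \/ exists x', x' ++ repeat c a ++ y = L.
Proof.
  intros Ha HL. revert x. induction r as [|r IH]; intros x H; [right; eauto|].
  destruct x as [|e x].
  - left. simpl in H. eapply repeat_prefix_le; eauto.
  - simpl in H. injection H as _ H. destruct (IH x H) as [H1|H1]; auto.
Qed.

Lemma infix_two_runs_split c r d L x y a b : 1 <= a -> 1 <= b -> 1 <= d ->
  (L = [] \/ exists L', L = c :: L') ->
  x ++ repeat c a ++ repeat (negb c) b ++ y = repeat c r ++ repeat (negb c) d ++ L ->
  (a <= r /\ b <= d) \/ exists x', x' ++ repeat c a ++ repeat (negb c) b ++ y = L.
Proof.
  intros Ha Hb Hd HL. revert x. induction r as [|r IH]; intros x H.
  - right. simpl in H. eapply (infix_skip_run (negb c) d L x); eauto.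
    destruct a; [lia|]. rewrite negb_involutive. simpl. eauto.
  - destruct x as [|e x].
    + left. simpl app in H. destruct b as [|b]; [lia|]. destruct d as [|d]; [lia|].
      simpl repeat in H. rewrite <- !app_comm_cons in H.
      change (c :: repeat c r ++ negb c :: repeat (negb c) d ++ L)
        with (repeat c (S r) ++ negb c :: repeat (negb c) d ++ L) in H.
      apply repeat_app_inj in H. destruct H as [H1 H2]. split; [lia|].
      assert (b <= d) by (eapply (repeat_prefix_le (negb c)); [rewrite negb_involutive|]; eauto).
      lia.
    + simpl in H. injection H as _ H. destruct (IH x H) as [H1|H1]; auto. left. lia.
Qed.

Lemma long_false_run_not_infix K n a : 1 <= K -> 3 * K < a ->
  ~ infix (repeat false a) (concat (repeat (wsigns K) n)).
Proof.
  intros HK Ha [x [y H]]. symmetry in H. revert x H. induction n as [|n IH]; intros x H.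
  - apply (f_equal (@length _)) in H. rewrite !length_app, repeat_length in H. simpl in H. lia.
  - simpl concat in H. rewrite wsigns_app in H.
    assert (Hp : exists z, repeat false a ++ y = negb true :: z) by (apply repeat_app_head; lia).
    assert (Ht : forall k l, 1 <= k ->
               repeat true k ++ l = [] \/ exists L', repeat true k ++ l = negb false :: L')
      by (intros k l Hk; right; apply repeat_app_head; auto).
    destruct (infix_skip_run true _ _ _ _ Hp H) as [x1 H1].
    destruct (infix_run_split false _ _ _ _ a ltac:(lia) (Ht K _ HK) H1) as [E|[x2 H2]];
      [lia|].
    destruct (infix_skip_run true _ _ _ _ Hp H2) as [x3 H3].
    destruct (infix_run_split false _ _ _ _ a ltac:(lia) (Ht (2 * K) _ ltac:(lia)) H3)
      as [E|[x4 H4]]; [lia|].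
    destruct (infix_skip_run true _ _ _ _ Hp H4) as [x5 H5].
    destruct (infix_run_split false _ _ _ _ a ltac:(lia) (Ht (3 * K) _ ltac:(lia)) H5)
      as [E|[x6 H6]]; [lia|].
    destruct (infix_skip_run true _ _ _ _ Hp H6) as [x7 H7].
    destruct (infix_run_split false _ _ _ _ a ltac:(lia) (wsigns_pow_head K n HK) H7)
      as [E|[x8 H8]]; [lia|].
    exact (IH x8 H8).
Qed.

(* The only [false]-run of length [3K] is followed by a [true]-run of length [K]. *)
Lemma false_true_runs_not_infix K n : 1 <= K ->
  ~ infix (repeat false (3 * K) ++ repeat true (2 * K)) (concat (repeat (wsigns K) n)).
Proof.
  intros HK [x [y H]]. rewrite <- app_assoc in H. symmetry in H.
  revert x H. induction n as [|n IH]; intros x H.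
  - apply (f_equal (@length _)) in H. rewrite !length_app, !repeat_length in H. simpl in H. lia.
  - simpl concat in H. rewrite wsigns_app in H.
    assert (Hp : exists z, repeat false (3 * K) ++ repeat true (2 * K) ++ y = negb true :: z)
      by (apply repeat_app_head; lia).
    assert (Hf : forall k l, 1 <= k ->
               repeat false k ++ l = [] \/ exists L', repeat false k ++ l = false :: L')
      by (intros k l Hk; right; apply repeat_app_head; auto).
    destruct (infix_skip_run true _ _ _ _ Hp H) as [x1 H1].
    destruct (infix_two_runs_split false K K _ _ _ (3 * K) (2 * K) ltac:(lia) ltac:(lia) HK
                (Hf K _ HK) H1) as [E|[x2 H2]]; [lia|].
    destruct (infix_two_runs_split false K (2 * K) _ _ _ (3 * K) (2 * K) ltac:(lia) ltac:(lia)
                ltac:(lia) (Hf (2 * K) _ ltac:(lia)) H2) as [E|[x3 H3]]; [lia|].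
    destruct (infix_two_runs_split false (2 * K) (3 * K) _ _ _ (3 * K) (2 * K) ltac:(lia)
                ltac:(lia) ltac:(lia) (Hf (3 * K) _ ltac:(lia)) H3) as [E|[x4 H4]]; [lia|].
    destruct n as [|n].
    + simpl in H4. rewrite app_nil_r in H4. apply (f_equal (@length _)) in H4.
      rewrite !length_app, !repeat_length in H4. lia.
    + simpl concat in H4, IH. rewrite wsigns_app in H4.
      destruct (infix_two_runs_split false (3 * K) K _ _ _ (3 * K) (2 * K) ltac:(lia)
                  ltac:(lia) HK (Hf K _ HK) H4) as [E|[x5 H5]]; [lia|].
      apply (IH (repeat true K ++ x5)). cbn [negb] in H5.
      rewrite wsigns_app, <- app_assoc, H5. reflexivity.
Qed.

Lemma wsigns_winv K : rev (map negb (wsigns K)) =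
  repeat true (3 * K) ++ repeat false (3 * K) ++ repeat true (2 * K) ++ repeat false (2 * K) ++
  repeat true K ++ repeat false K ++ repeat true K ++ repeat false K.
Proof.
  unfold wsigns. rewrite !map_app, !map_repeat. simpl negb.
  rewrite !rev_app_distr, !rev_repeat, <- !app_assoc. reflexivity.
Qed.

Lemma wsigns_winv_not_infix K n : 1 <= K ->
  ~ infix (rev (map negb (wsigns K))) (concat (repeat (wsigns K) n)).
Proof.
  intros HK HI. apply (false_true_runs_not_infix K n HK). eapply infix_trans; [|exact HI].
  rewrite wsigns_winv. exists (repeat true (3 * K)), (repeat false (2 * K) ++
    repeat true K ++ repeat false K ++ repeat true K ++ repeat false K).
  rewrite <- !app_assoc. reflexivity.
Qed.

Lemma wsigns_larger_not_infix K K' n : 1 <= K -> 3 * K < K' ->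
  ~ infix (wsigns K') (concat (repeat (wsigns K) n)).
Proof.
  intros HK HK' HI. apply (long_false_run_not_infix K n K' HK HK'). eapply infix_trans; [|exact HI].
  exists (repeat true K'), (repeat true K' ++ repeat false K' ++ repeat true (2 * K') ++
    repeat false (2 * K') ++ repeat true (3 * K') ++ repeat false (3 * K')).
  reflexivity.
Qed.

Lemma wsigns_winv_larger_not_infix K K' n : 1 <= K -> 3 * K < K' ->
  ~ infix (rev (map negb (wsigns K'))) (concat (repeat (wsigns K) n)).
Proof.
  intros HK HK' HI. apply (long_false_run_not_infix K n (3 * K') HK ltac:(lia)).
  eapply infix_trans; [|exact HI]. rewrite wsigns_winv.
  exists (repeat true (3 * K')), (repeat true (2 * K') ++ repeat false (2 * K') ++
    repeat true K' ++ repeat false K' ++ repeat true K' ++ repeat false K').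
  reflexivity.
Qed.

Section Cw.
Variables (A : Grp) (C : A -> Prop) (phi : A -> A).

Lemma word_length_intro x :
  is_word A x -> (forall v, hnn_eq A C phi v x -> length x <= length v) ->
  word_length A C phi x (length x).
Proof.
  intros Hx Hmin. split.
  - exists x. repeat split; auto. apply he_refl.
  - intros k [v [_ [Hv <-]]]. exact (Hmin v Hv).
Qed.

Lemma cw_val_pow u n : 1 <= length u -> is_word A (wpow A u n) ->
  (forall v, hnn_eq A C phi v (wpow A u n) -> n * length u <= length v) ->
  cw_val A C phi u (wpow A u n) n.
Proof.
  intros Hu Hw Hmin.
  pose proof (length_wpow A u n) as Hlen.
  exists (n * length u), (n * length u - n). split; [|split; [split|]].
  - rewrite <- Hlen. apply word_length_intro; auto. rewrite Hlen. exact Hmin.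
  - exists (wpow A u n), n. split; [exact Hw|]. split; [apply he_refl|]. split; [split|].
    + apply occ_k_pow.
    + intros k Hk. apply occ_k_length in Hk. rewrite Hlen in Hk. nia.
    + rewrite Hlen. reflexivity.
  - intros m [v [k [_ [Hv [[Hocc _] ->]]]]].
    pose proof (Hmin v Hv). apply occ_k_length in Hocc.
    destruct (Nat.le_gt_cases k n); nia.
  - nia.
Qed.

Lemma cw_val_zero u x : 1 <= length u -> is_word A x ->
  (forall v k, hnn_eq A C phi v x -> occ_k A u v k -> length x + k <= length v) ->
  cw_val A C phi u x 0.
Proof.
  intros Hu Hx Hmin.
  exists (length x), (length x). split; [|split; [split|]].
  - apply word_length_intro; auto. intros v Hv. pose proof (Hmin v 0 Hv (occ_k_0 A u v)). lia.
  - destruct (count_occ_exists A u x Hu) as [k Hk].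
    pose proof (Hmin x k (he_refl _ _ _ _) (proj1 Hk)).
    exists x, k. split; [exact Hx|]. split; [apply he_refl|]. split; [exact Hk | lia].
  - intros m [v [k [_ [Hv [[Hocc _] ->]]]]]. pose proof (Hmin v k Hv Hocc). lia.
  - lia.
Qed.

End Cw.

Section WordInverse.
Variable A : Grp.

Lemma tsigns_winv (u : list (letter A)) : tsigns A (winv A u) = rev (map negb (tsigns A u)).
Proof.
  unfold winv. induction u as [|l u IH]; simpl; auto.
  rewrite tsigns_app, IH. destruct l; simpl; auto. rewrite app_nil_r. reflexivity.
Qed.

Lemma t_count_winv (u : list (letter A)) : t_count A (winv A u) = t_count A u.
Proof. unfold t_count. rewrite tsigns_winv, length_rev, length_map. reflexivity. Qed.

Lemma winv_tp k : winv A (tp A k) = tn A k.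
Proof. unfold winv, tp, tn. rewrite map_repeat, rev_repeat. reflexivity. Qed.

Lemma winv_conj k (x : A) : winv A (tp A k ++ [LA x] ++ tn A k) = tp A k ++ [LA (ginv x)] ++ tn A k.
Proof.
  unfold winv, tp, tn. rewrite !map_app, !rev_app_distr, !map_repeat, !rev_repeat.
  rewrite <- app_assoc. reflexivity.
Qed.

End WordInverse.

Section TBlocks.
Variables (A : Grp) (C : A -> Prop) (phi : A -> A).
Hypothesis HC : is_subgroup A C.
Hypothesis Hphi : is_inj_hom A C phi.

Local Notation "x * y" := (gmul x y).
Local Notation in_sub := (in_sub A C phi).
Local Notation rep := (rep A C phi).
Local Notation act := (act A C phi).

Definition tblock (p : nat * A * nat * A) : list (letter A) :=
  let '(k, x, l, y) := p in tp A k ++ [LA x] ++ tn A l ++ [LA y].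

Definition tblock_signs (p : nat * A * nat * A) : list bool :=
  let '(k, _, l, _) := p in repeat true k ++ repeat false l.

Definition reduced_tblock (p : nat * A * nat * A) : Prop :=
  let '(k, x, l, y) := p in 1 <= k /\ 1 <= l /\ ~ in_sub true x /\ ~ in_sub false y.

Lemma act_push_run b k s : (exists r rest, snd s = (b, r) :: rest) -> in_sub (negb b) (fst s) ->
  exists E, snd (act (repeat (tl b) k) s) = E ++ snd s /\ map fst E = repeat b k /\
    in_sub (negb b) (fst (act (repeat (tl b) k) s)) /\
    (exists r rest, snd (act (repeat (tl b) k) s) = (b, r) :: rest).
Proof.
  intros Htop Hin. induction k as [|k IH]; [exists []; simpl; auto|].
  destruct IH as [E [H1 [H2 [H3 [r [rest H4]]]]]].
  simpl repeat. rewrite act_tl.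
  destruct (act_t_cases A C phi b (act (repeat (tl b) k) s)) as [[r' [E1 _]] | [E1 _]].
  - exfalso. rewrite H4 in E1. injection E1; intros. destruct b; discriminate.
  - rewrite E1. unfold push. cbn [fst snd].
    exists ((b, rep b (fst (act (repeat (tl b) k) s))) :: E).
    rewrite H1. simpl. rewrite H2. repeat split; eauto. apply lead_in; auto.
Qed.

Lemma act_segment b k x s : 1 <= k -> ~ in_sub b (x * fst s) ->
  exists E, snd (act (repeat (tl b) k ++ [LA x]) s) = E ++ snd s /\ map fst E = repeat b k /\
    in_sub (negb b) (fst (act (repeat (tl b) k ++ [LA x]) s)) /\ last_rep_ne1 A E.
Proof.
  intros Hk Hn. destruct k as [|k]; [lia|].
  assert (Hne : rep b (x * fst s) <> gone) by (intro E0; apply Hn, rep_one; auto).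
  assert (Hs1 : act [tl b; LA x] s = push A C phi b (x * fst s, snd s)).
  { rewrite act_tl. apply act_t_push. intros [H _]. exact (Hne H). }
  change (repeat (tl b) (S k)) with (tl b :: repeat (@tl A b) k).
  rewrite repeat_cons, <- app_assoc, act_app. simpl app. rewrite Hs1.
  destruct (act_push_run b k (push A C phi b (x * fst s, snd s))) as [E [H1 [H2 [H3 _]]]].
  { unfold push. simpl. eauto. }
  { apply lead_in; auto. }
  exists (E ++ [(b, rep b (x * fst s))]). repeat split.
  - rewrite H1. unfold push. simpl. rewrite <- app_assoc. reflexivity.
  - rewrite map_app, H2. simpl. symmetry. apply repeat_cons.
  - exact H3.
  - intros Z y HZ. apply app_inj_tail in HZ as [_ <-]. exact Hne.
Qed.

Lemma act_tblock p s : reduced_tblock p -> in_sub false (fst s) ->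
  exists E, snd (act (tblock p) s) = E ++ snd s /\ map fst E = tblock_signs p /\
    in_sub false (fst (act (tblock p) s)) /\ last_rep_ne1 A E.
Proof.
  destruct p as [[[k x] l] y]. intros [Hk [Hl [Hx Hy]]] Hs.
  replace (tblock (k, x, l, y))
    with ((repeat (tl true) k ++ [LA x]) ++ (repeat (tl false) l ++ [LA y]))
    by (simpl; rewrite <- !app_assoc; reflexivity).
  rewrite act_app.
  destruct (act_segment false l y s Hl (not_in_subM A C phi HC Hphi _ _ _ Hy Hs))
    as [E2 [H2a [H2b [H2c H2d]]]].
  destruct (act_segment true k x _ Hk (not_in_subM A C phi HC Hphi _ _ _ Hx H2c))
    as [E1 [H1a [H1b [H1c H1d]]]].
  exists (E1 ++ E2). repeat split.
  - rewrite H1a, H2a, app_assoc. reflexivity.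
  - rewrite map_app, H1b, H2b. reflexivity.
  - exact H1c.
  - apply last_rep_ne1_app; assumption.
Qed.

Lemma act_tblocks ps s : Forall reduced_tblock ps -> in_sub false (fst s) ->
  exists E, snd (act (concat (map tblock ps)) s) = E ++ snd s /\
    map fst E = concat (map tblock_signs ps) /\
    in_sub false (fst (act (concat (map tblock ps)) s)) /\ last_rep_ne1 A E.
Proof.
  intros Hps Hs. induction Hps as [|p ps Hp Hps IH].
  - exists []. repeat split; auto. intros Z x HZ. destruct Z; discriminate.
  - destruct IH as [E [H1 [H2 [H3 H4]]]]. simpl. rewrite act_app.
    destruct (act_tblock p _ Hp H3) as [Ep [Hp1 [Hp2 [Hp3 Hp4]]]].
    exists (Ep ++ E). repeat split.
    + rewrite Hp1, H1, app_assoc. reflexivity.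
    + rewrite map_app, Hp2, H2. reflexivity.
    + exact Hp3.
    + apply last_rep_ne1_app; assumption.
Qed.

End TBlocks.

Lemma concat_repeat_concat_map {T U : Type} (f : T -> list U) ps n :
  concat (repeat (concat (map f ps)) n) = concat (map f (concat (repeat ps n))).
Proof.
  induction n as [|n IH]; [reflexivity|]. simpl. rewrite IH, map_app, concat_app. reflexivity.
Qed.

Lemma pow10_ge1 i : 1 <= 10 ^ i.
Proof. pose proof (Nat.pow_nonzero 10 i ltac:(lia)). lia. Qed.

Lemma pow10_gap i j : i < j -> 3 * 10 ^ i < 10 ^ j.
Proof.
  intro H. assert (10 ^ S i <= 10 ^ j) by (apply Nat.pow_le_mono_r; lia).
  rewrite Nat.pow_succ_r' in H0. pose proof (pow10_ge1 i). lia.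
Qed.

Section WordW.
Variable A : Grp.

Definition wblocks (g h : A) (K : nat) : list (nat * A * nat * A) :=
  [(K, g, K, h); (K, ginv g, K, ginv h); (2 * K, g, 2 * K, h); (3 * K, ginv g, 3 * K, ginv h)].

Lemma w_i_tblocks (g h : A) i : w_i A g h i = concat (map (tblock A) (wblocks g h (10 ^ i))).
Proof.
  unfold w_i, wblocks, tblock. cbn [map concat]. rewrite app_nil_r, <- !app_assoc.
  reflexivity.
Qed.

Lemma tsigns_tblock p : tsigns A (tblock A p) = tblock_signs A p.
Proof.
  destruct p as [[[k x] l] y]. cbn [tblock tblock_signs].
  rewrite !tsigns_app, tsigns_tp, tsigns_tn. simpl. rewrite app_nil_r. reflexivity.
Qed.

Lemma tsigns_tblocks ps :
  tsigns A (concat (map (tblock A) ps)) = concat (map (tblock_signs A) ps).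
Proof.
  induction ps as [|p ps IH]; [reflexivity|].
  simpl. rewrite tsigns_app, tsigns_tblock, IH. reflexivity.
Qed.

Lemma wsigns_tblocks (g h : A) K : concat (map (tblock_signs A) (wblocks g h K)) = wsigns K.
Proof. simpl. rewrite app_nil_r, <- !app_assoc. reflexivity. Qed.

Lemma tsigns_w_i (g h : A) i : tsigns A (w_i A g h i) = wsigns (10 ^ i).
Proof. rewrite w_i_tblocks, tsigns_tblocks, wsigns_tblocks. reflexivity. Qed.

Lemma length_w_i (g h : A) i : length (w_i A g h i) = 14 * 10 ^ i + 8.
Proof.
  rewrite length_t_a. unfold t_count. rewrite tsigns_w_i.
  unfold w_i, wsigns. rewrite !a_count_app, !a_count_tp, !a_count_tn, !length_app, !repeat_length.
  simpl. lia.
Qed.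

Lemma is_word_w_i (g h : A) i : g <> gone -> h <> gone -> is_word A (w_i A g h i).
Proof.
  intros Hg Hh a Ha.
  assert (Hgi : ginv g <> gone) by (intro E; apply Hg, ginv_eq1, E).
  assert (Hhi : ginv h <> gone) by (intro E; apply Hh, ginv_eq1, E).
  assert (Ht : forall k, ~ In (LA a) (tp A k) /\ ~ In (LA a) (tn A k))
    by (split; intro Hin; apply repeat_spec in Hin; discriminate).
  unfold w_i in Ha. rewrite !in_app_iff in Ha. cbn [In] in Ha.
  decompose [or] Ha; clear Ha;
  match goal with
  | H : In _ (tp _ _) |- _ => exfalso; exact (proj1 (Ht _) H)
  | H : In _ (tn _ _) |- _ => exfalso; exact (proj2 (Ht _) H)
  | H : LA _ = LA _ |- _ => injection H as <-; assumption
  | H : False |- _ => destruct H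
  end.
Qed.

Lemma is_word_wpow (u : list (letter A)) n : is_word A u -> is_word A (wpow A u n).
Proof.
  intros Hu a Ha. unfold wpow in Ha. apply in_concat in Ha as [y [Hy Ha]].
  apply repeat_spec in Hy. subst y. exact (Hu a Ha).
Qed.

End WordW.

Section Commutator.
Variables (A : Grp) (C : A -> Prop) (phi : A -> A).

Lemma hnn_eq_conj_prod K (g : A) :
  hnn_eq A C phi (tp A K ++ tp A (2 * K) ++ [LA (ginv g)] ++ tn A (2 * K) ++ tn A K ++
                  tp A (3 * K) ++ [LA g] ++ tn A (3 * K)) [].
Proof.
  assert (Ep : tp A K ++ tp A (2 * K) = tp A (3 * K))
    by (unfold tp; rewrite <- repeat_app; f_equal; lia).
  assert (En : tn A (2 * K) ++ tn A K = tn A (3 * K))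
    by (unfold tn; rewrite <- repeat_app; f_equal; lia).
  rewrite app_assoc, Ep, (app_assoc (tn A (2 * K))), En.
  apply hnn_eq_conjV.
Qed.

(* With [a_k = t^k g t^-k]: [w_i = [a_K, h] [a_2K, t^K] [a_3K, h]] for [K = 10^i]. *)
Lemma w_i_in_commutator (g h : A) i : in_commutator A C phi (w_i A g h i).
Proof.
  set (K := 10 ^ i).
  set (conj k := tp A k ++ [LA g] ++ tn A k).
  exists [(conj K, [LA h]); (conj (2 * K), tp A K); (conj (3 * K), [LA h])].
  cbn [map concat fst snd]. unfold conj. rewrite !winv_conj, winv_tp.
  change (winv A [LA h]) with [LA (ginv h)].
  set (P := tp A K ++ [LA g] ++ tn A K ++ [LA h] ++ tp A K ++ [LA (ginv g)] ++ tn A K ++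
            [LA (ginv h)] ++ tp A (2 * K) ++ [LA g]).
  set (S := [LA h] ++ tp A (3 * K) ++ [LA (ginv g)] ++ tn A (3 * K) ++ [LA (ginv h)]).
  set (M := tp A K ++ tp A (2 * K) ++ [LA (ginv g)] ++ tn A (2 * K) ++ tn A K ++
            tp A (3 * K) ++ [LA g] ++ tn A (3 * K)).
  apply he_sym.
  eapply he_trans with (v := P ++ (tn A (2 * K) ++ M) ++ S).
  { unfold P, S, M. rewrite !app_nil_r, <- !app_assoc. apply he_refl. }
  eapply he_trans; [apply he_ctx, hnn_eq_app_l, hnn_eq_conj_prod|].
  unfold P, S, w_i. rewrite !app_nil_r, <- !app_assoc. apply he_refl.
Qed.

End Commutator.

Section PowersOfW.
Variables (A : Grp) (C : A -> Prop) (phi : A -> A).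
Hypothesis HC : is_subgroup A C.
Hypothesis Hphi : is_inj_hom A C phi.
Variables g h : A.
Hypothesis Hg : ~ in_sub A C phi true g.
Hypothesis Hh : ~ in_sub A C phi false h.

Local Notation act := (act A C phi).
Local Notation W i n := (wpow A (w_i A g h i) n).

Lemma reduced_wblocks K n : 1 <= K ->
  Forall (reduced_tblock A C phi) (concat (repeat (wblocks A g h K) n)).
Proof.
  intro HK. apply Forall_forall. intros p Hp.
  apply in_concat in Hp as [ps [Hps Hp]]. apply repeat_spec in Hps. subst ps.
  assert (Hgi := not_in_subV A C phi HC Hphi _ _ Hg).
  assert (Hhi := not_in_subV A C phi HC Hphi _ _ Hh).
  simpl in Hp. decompose [or] Hp; try contradiction; subst; cbn; repeat split; auto; lia.
Qed.

Lemma normal_form_wpow i n : exists E,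
  (forall v, hnn_eq A C phi v (W i n) -> snd (act v (state1 A)) = E) /\
  map fst E = concat (repeat (wsigns (10 ^ i)) n) /\ last_rep_ne1 A E.
Proof.
  assert (HW : W i n = concat (map (tblock A) (concat (repeat (wblocks A g h (10 ^ i)) n))))
    by (unfold wpow; rewrite w_i_tblocks; apply concat_repeat_concat_map).
  destruct (act_tblocks A C phi HC Hphi _ (state1 A) (reduced_wblocks _ n (pow10_ge1 i))
              (in_sub1 A C phi HC Hphi false)) as [E [H1 [H2 [_ H4]]]].
  exists E. split; [|split; [|exact H4]].
  - intros v Hv. rewrite (act_hnn_eq A C phi HC Hphi _ _ _ Hv (valid_state1 A C phi)).
    rewrite HW, H1. apply app_nil_r.
  - rewrite H2, <- concat_repeat_concat_map, wsigns_tblocks. reflexivity.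
Qed.

Lemma length_normal_form_wpow i n (E : list (bool * gcar A)) :
  map fst E = concat (repeat (wsigns (10 ^ i)) n) ->
  length (W i n) = length E + runs (map fst E).
Proof.
  intro H2. rewrite H2, runs_wsigns_pow by apply pow10_ge1.
  rewrite <- (length_map fst E), H2, length_wpow, length_w_i.
  enough (length (concat (repeat (wsigns (10 ^ i)) n)) = n * (14 * 10 ^ i)) by lia.
  clear. induction n as [|n IH]; simpl; auto. rewrite length_app, IH.
  unfold wsigns. rewrite !length_app, !repeat_length. lia.
Qed.

Lemma length_wpow_le i n v : hnn_eq A C phi v (W i n) -> length (W i n) <= length v.
Proof.
  intro Hv. destruct (normal_form_wpow i n) as [E [H1 [H2 H3]]].
  rewrite (length_normal_form_wpow i n E H2).
  exact (length_ge_normal_form A C phi HC Hphi E H3 v (H1 v Hv)).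
Qed.

Lemma length_wpow_occ_le i n u v k : ~ infix (tsigns A u) (concat (repeat (wsigns (10 ^ i)) n)) ->
  1 <= t_count A u -> hnn_eq A C phi v (W i n) -> occ_k A u v k -> length (W i n) + k <= length v.
Proof.
  intros Hni Hnt Hv [x0 [xs [<- ->]]]. destruct (normal_form_wpow i n) as [E [H1 [H2 H3]]].
  rewrite (length_normal_form_wpow i n E H2).
  pose proof (length_ge_normal_form_occ A C phi HC Hphi E H3 u x0 xs) as HL.
  rewrite <- H2 in Hni. specialize (HL Hni Hnt (H1 _ Hv)). lia.
Qed.

Lemma is_word_W i n : is_word A (W i n).
Proof.
  apply is_word_wpow, is_word_w_i.
  - intro E. apply Hg. rewrite E. apply in_sub1; auto.
  - intro E. apply Hh. rewrite E. apply in_sub1; auto.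
Qed.

Lemma cw_val_w_i i n : cw_val A C phi (w_i A g h i) (W i n) n.
Proof.
  apply cw_val_pow.
  - rewrite length_w_i. lia.
  - apply is_word_W.
  - intros v Hv. rewrite <- length_wpow. apply length_wpow_le, Hv.
Qed.

Lemma cw_val_w_i_zero i n u : 1 <= t_count A u ->
  ~ infix (tsigns A u) (concat (repeat (wsigns (10 ^ i)) n)) -> cw_val A C phi u (W i n) 0.
Proof.
  intros Hnt Hni. apply cw_val_zero.
  - rewrite length_t_a. lia.
  - apply is_word_W.
  - intros v k Hv Hk. apply (length_wpow_occ_le i n u v k); auto.
Qed.

Lemma cw_val_winv_w_i i n : cw_val A C phi (winv A (w_i A g h i)) (W i n) 0.
Proof.
  apply cw_val_w_i_zero.
  - rewrite t_count_winv. unfold t_count. rewrite tsigns_w_i, length_wsigns.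
    pose proof (pow10_ge1 i). lia.
  - rewrite tsigns_winv, tsigns_w_i. apply wsigns_winv_not_infix, pow10_ge1.
Qed.

Lemma cw_val_w_j i j n : i < j -> cw_val A C phi (w_i A g h j) (W i n) 0.
Proof.
  intro Hij. apply cw_val_w_i_zero.
  - unfold t_count. rewrite tsigns_w_i, length_wsigns. pose proof (pow10_ge1 j). lia.
  - rewrite tsigns_w_i. apply wsigns_larger_not_infix; auto using pow10_ge1, pow10_gap.
Qed.

Lemma cw_val_winv_w_j i j n : i < j -> cw_val A C phi (winv A (w_i A g h j)) (W i n) 0.
Proof.
  intro Hij. apply cw_val_w_i_zero.
  - rewrite t_count_winv. unfold t_count. rewrite tsigns_w_i, length_wsigns.
    pose proof (pow10_ge1 j). lia.
  - rewrite tsigns_winv, tsigns_w_i.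
    apply wsigns_winv_larger_not_infix; auto using pow10_ge1, pow10_gap.
Qed.

End PowersOfW.

Theorem lemma7p2 (A : Grp) (C : A -> Prop) (phi : A -> A)
  (HC : is_subgroup A C) (Hphi : is_inj_hom A C phi)
  (HAC : exists a : A, ~ C a)
  (HAphiC : exists a : A, forall c, C c -> phi c <> a)
  (g h : A) (Hg : ~ C g) (Hh : forall c, C c -> phi c <> h) :
  (forall i n, 1 <= n -> cw_val A C phi (w_i A g h i) (wpow _ (w_i A g h i) n) n) /\
  (forall i n, 1 <= n ->
     cw_val A C phi (winv A (w_i A g h i)) (wpow _ (w_i A g h i) n) 0) /\
  (forall i j n, i < j -> 1 <= n ->
     cw_val A C phi (w_i A g h j) (wpow _ (w_i A g h i) n) 0 /\
     cw_val A C phi (winv A (w_i A g h j)) (wpow _ (w_i A g h i) n) 0) /\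
  (forall i, in_commutator A C phi (w_i A g h i)).
Proof.
  assert (Hh' : ~ in_sub A C phi false h) by (intros [c [Hc E]]; exact (Hh c Hc E)).
  split; [|split; [|split]].
  - intros i n _. exact (cw_val_w_i A C phi HC Hphi g h Hg Hh' i n).
  - intros i n _. exact (cw_val_winv_w_i A C phi HC Hphi g h Hg Hh' i n).
  - intros i j n Hij _. split.
    + exact (cw_val_w_j A C phi HC Hphi g h Hg Hh' i j n Hij).
    + exact (cw_val_winv_w_j A C phi HC Hphi g h Hg Hh' i j n Hij).
  - intro i. apply w_i_in_commutator.
Qed.
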